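(* Let $n,m,k$ be integers with $n\geq m\geq 1$, $k\geq 3$ and $n\leq 6m+6$. Then $$ gr_{k}(K_{3} : S(n, m))\leq \begin{cases} 2n+m(k+3)+8 & \text{ if $n$ is even,}\\ 2n+m(k+3)+9 & \text{ if $n$ is odd.} \end{cases} $$
   Context: For integers $n\geq m\geq 0$, the double star $S(n,m)$ is the graph obtained from the disjoint union of the stars $K_{1,n}$ and $K_{1,m}$ by adding an edge between their centers. A $k$-coloring of a graph is an assignment of one of $k$ colors to each edge. A subgraph is rainbow if all its edges have distinct colors and monochromatic if all its edges have the same color. For graphs $G,H$ and a positive integer $k$, the Gallai–Ramsey number $gr_k(G:H)$ is the minimum integer $N$ such that every $k$-coloring of the edges of the complete graph $K_N$ contains either a rainbow copy of $G$ or a monochromatic copy of $H$. *)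

From mathcomp Require Import all_boot.
Set Implicit Arguments. Unset Strict Implicit. Unset Printing Implicit Defensive.

(* A k-coloring of the edges of K_N: a symmetric map on pairs of vertices
   'I_N into colors 'I_k (only values on distinct pairs matter). *)
Definition symmetric_coloring (N k : nat) (c : 'I_N -> 'I_N -> 'I_k) : Prop :=
  forall x y, c x y = c y x.

Definition has_rainbow_K3 (N k : nat) (c : 'I_N -> 'I_N -> 'I_k) : Prop :=
  exists x y z : 'I_N,
    [/\ x != y, y != z & x != z] /\
    [/\ c x y != c y z, c y z != c x z & c x y != c x z].

Definition has_mono_double_star (n m N k : nat) (c : 'I_N -> 'I_N -> 'I_k) : Prop :=
  exists (col : 'I_k) (u v : 'I_N) (A B : {set 'I_N}),
    [/\ u != v, #|A| = n, #|B| = m & [disjoint A & B]] /\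
    [/\ u \notin A :|: B, v \notin A :|: B, c u v = col,
        (forall a, a \in A -> c u a = col) &
        (forall b, b \in B -> c v b = col)].

Definition gr_property (n m k N : nat) : Prop :=
  forall c : 'I_N -> 'I_N -> 'I_k, symmetric_coloring c ->
    has_rainbow_K3 c \/ has_mono_double_star n m c.

(* gr_k(K_3 : S(n,m)) <= B  iff  the least N with gr_property is <= B,
   i.e. some N <= B has the property. *)
Definition gr_K3_double_star_le (n m k B : nat) : Prop :=
  exists N, N <= B /\ gr_property n m k N.

From mathcomp Require Import all_boot.
From mathcomp Require Import zify.
From Stdlib Require Import Classical.
Set Implicit Arguments. Unset Strict Implicit. Unset Printing Implicit Defensive.

(* Call a vertex set a module if every vertex outside it sees all of it in a
   single colour.  In a colouring with no rainbow triangle and no monochromatic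
   S(n,m), take a smallest module S with more than n vertices.  The vertices
   outside S, sorted by the colour in which they see S, form at most k classes
   of at most m vertices each, so S has at least 2n + 3m + 8 vertices.  The
   maximal proper submodules of S partition it, and Gallai's argument shows that
   at most two colours occur between different parts.  Counting the neighbours
   of each colour that a vertex has outside its own part then shows, using the
   absence of monochromatic double stars, that every part has more than 3m
   vertices.  Finally, among three vertices in distinct parts, the absence of a
   rainbow triangle gives one of them that sees the other two parts in one
   colour: it has more than 6m + 6 >= n such neighbours, which together with its
   own part yields a monochromatic double star. *)

Lemma card_subset_eq (T : finType) (A : {set T}) j :
  j <= #|A| -> exists2 B : {set T}, B \subset A & #|B| = j.
Proof.
case/card_geqP => s [s_uniq s_size sA]; exists [set x in s].
  by apply/subsetP => x; rewrite inE => /sA.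
by rewrite cardsE (card_uniqP s_uniq).
Qed.

Lemma exists_disconnected (T : finType) (e : rel T) (U : {set T}) x y w :
  connect_sym e -> x \in U -> y \in U -> ~~ connect e x y ->
  exists2 z, z \in U & ~~ connect e w z.
Proof.
move=> e_sym xU yU nxy; have [wx | ] := boolP (connect e w x); last by exists x.
by exists y => //; apply: contra nxy; apply: connect_trans; rewrite e_sym.
Qed.

Section Coloring.
Variables (T K : finType) (c : T -> T -> K).
Hypothesis c_sym : forall x y, c x y = c y x.

Definition module (X : {set T}) : bool :=
  [forall y in ~: X, forall x in X, forall x' in X, c y x == c y x'].

Lemma moduleP (X : {set T}) :
  reflect (forall y x x', y \notin X -> x \in X -> x' \in X -> c y x = c y x')
          (module X).
Proof.
apply: (iffP forall_inP) => [mX y x x' yX xX x'X | mX y].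
  move: (mX y); rewrite inE => /(_ yX) /forall_inP /(_ x xX).
  by move=> /forall_inP /(_ x' x'X) /eqP.
rewrite inE => yX; apply/forall_inP => x xX; apply/forall_inP => x' x'X.
exact/eqP/mX.
Qed.

Lemma moduleT : module setT.
Proof. by apply/moduleP => y x x'; rewrite inE. Qed.

Lemma module1 x : module [set x].
Proof. by apply/moduleP => y a b _; rewrite !inE => /eqP -> /eqP ->. Qed.

Lemma moduleU (X Y : {set T}) x :
  module X -> module Y -> x \in X -> x \in Y -> module (X :|: Y).
Proof.
move=> /moduleP mX /moduleP mY xX xY; apply/moduleP => y a b.
rewrite !inE negb_or => /andP [yX yY].
have to_x z : (z \in X) || (z \in Y) -> c y z = c y x.
  by case/orP => zXY; [apply: mX | apply: mY].
by move=> /to_x -> /to_x ->.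
Qed.

Definition color_rel (col : K) (U : {set T}) : rel T :=
  fun x y => [&& x \in U, y \in U, x != y & c x y == col].

Definition connected_in col (U : {set T}) :=
  {in U &, forall x y, connect (color_rel col U) x y}.

Definition used_in col (U : {set T}) := exists x y, color_rel col U x y.

Lemma color_relC col (U : {set T}) : symmetric (color_rel col U).
Proof.
move=> x y; apply/and4P/and4P => [] [-> -> xy /eqP <-];
  by split => //; rewrite 1?eq_sym // c_sym.
Qed.

Lemma connect_color_sym col (U : {set T}) : connect_sym (color_rel col U).
Proof. exact/sym_connect_sym/color_relC. Qed.

Lemma connect_color_in col (U : {set T}) x y :
  connect (color_rel col U) x y -> x \in U -> y \in U.
Proof.
move=> xy xU; rewrite -(closed_connect _ xy) //.
by move=> s t /and4P [-> -> _ _].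
Qed.

Lemma color_edge_of_connect col (U : {set T}) x y :
  x != y -> connect (color_rel col U) x y -> exists z, color_rel col U x z.
Proof.
move=> xy /connectP [[|z p] /=]; last by case/andP => xz _ _; exists z.
by move=> _ eq_y; rewrite eq_y eqxx in xy.
Qed.

Lemma used_inS col (U W : {set T}) :
  U \subset W -> used_in col U -> used_in col W.
Proof.
move=> /subsetP UW [x [y]]; rewrite /color_rel => /and4P [xU yU xy cxy].
by exists x, y; apply/and4P; split; rewrite ?UW.
Qed.

Hypothesis no_rainbow : forall x y z, x != y -> y != z -> x != z ->
  c x y = c y z \/ c y z = c x z \/ c x y = c x z.

Lemma outside_edge_color col (U : {set T}) r x y :
  r \in U -> color_rel col U x y -> ~~ connect (color_rel col U) x r ->
  c r x = c r y.
Proof.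
move=> rU exy nxr; move: (exy) => /and4P [xU yU xy /eqP cxy].
have nyr : ~~ connect (color_rel col U) y r.
  by apply: contra nxr; apply: connect_trans (connect1 exy).
have rx : r != x by apply: contraNneq nxr => ->.
have ry : r != y by apply: contraNneq nyr => ->.
have edge_to_r u : u \in U -> r != u -> c r u = col ->
    connect (color_rel col U) u r.
  move=> uU ru cru; apply: connect1.
  by rewrite /color_rel uU rU eq_sym ru c_sym cru eqxx.
have crx : c r x != col by apply: contra nxr => /eqP; apply: edge_to_r.
have cry : c r y != col by apply: contra nyr => /eqP; apply: edge_to_r.
case: (no_rainbow rx xy ry) => [crx_col | [cry_col | //]].
  by rewrite crx_col cxy eqxx in crx.
by rewrite -cry_col cxy eqxx in cry.
Qed.

Lemma outside_component_color col (U : {set T}) a r d : r \in U ->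
  ~~ connect (color_rel col U) a r -> connect (color_rel col U) a d ->
  c r d = c r a.
Proof.
move=> rU nar /connectP [p].
elim: p a nar => [|z p IH] a nar /=; first by move=> _ ->.
case/andP => eaz pz d_last.
have nzr : ~~ connect (color_rel col U) z r.
  by apply: contra nar; apply: connect_trans (connect1 eaz).
by rewrite (IH z nzr pz d_last) (outside_edge_color rU eaz nar).
Qed.

Section VertexDeletion.
Variables (col : K) (U : {set T}) (v x y : T).
Hypothesis col_conn : connected_in col U.
Hypotheses (xU' : x \in U :\ v) (yU' : y \in U :\ v).
Hypothesis xy_disconn : ~~ connect (color_rel col (U :\ v)) x y.
Local Notation U' := (U :\ v).
Local Notation conn' := (connect (color_rel col U')).

Let disconnected_from w : exists2 z, z \in U' & ~~ conn' w z :=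
  exists_disconnected w (connect_color_sym col U') xU' yU' xy_disconn.

Lemma component_meets_color w : w \in U' -> exists2 z, conn' w z & c v z = col.
Proof.
move=> wU'; case: (pickP (fun z => conn' w z && (c v z == col))).
  by move=> z /andP [wz /eqP vz]; exists z.
move=> none; have [z zU' nwz] := disconnected_from w.
have nwv : ~~ conn' w v.
  by apply/negP => /connect_color_in /(_ wU'); rewrite setD11.
have nw_of_v u : c u v = col -> ~~ conn' w u.
  by move=> cuv; apply/negP => wu; move: (none u); rewrite wu c_sym cuv eqxx.
suff comp_closed : closed (color_rel col U) (conn' w).
  have sub_U : {subset U' <= U} by move=> u /setD1P [].
  have := closed_connect comp_closed (col_conn (sub_U _ wU') (sub_U _ zU')).
  by rewrite -!topredE /= connect0 (negbTE nwz).
move=> s t /and4P [sU tU st /eqP cst]; rewrite -!topredE /=.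
case: (eqVneq s v) => [sv | s_v].
  have ctv : c t v = col by rewrite c_sym -sv.
  by rewrite sv (negbTE nwv) (negbTE (nw_of_v _ ctv)).
case: (eqVneq t v) => [tv | t_v].
  have csv : c s v = col by rewrite -tv.
  by rewrite tv (negbTE nwv) (negbTE (nw_of_v _ csv)).
have e' : color_rel col U' s t.
  by rewrite /color_rel !inE s_v t_v sU tU st cst eqxx.
apply/idP/idP => [ws|wt]; first exact: connect_trans ws (connect1 e').
by apply: connect_trans wt _; rewrite connect_color_sym; apply: connect1.
Qed.

Lemma color_seen_from_deleted p z : p \in U' -> z \in U' ->
  c v p != col -> ~~ conn' p z -> c v p = c z p.
Proof.
move=> pU' zU' cvp npz.
have [z' zz' cvz'] := component_meets_color zU'.
have z'U' : z' \in U' by apply: connect_color_in zz' zU'.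
have nzp : ~~ conn' z p by rewrite connect_color_sym.
have npz' : ~~ conn' p z'.
  by apply: contra npz => pz'; apply: connect_trans pz' _; rewrite connect_color_sym.
have cpz : c p z' = c p z := outside_component_color pU' nzp zz'.
have vp : v != p by apply: contraTneq pU' => <-; rewrite setD11.
have vz' : v != z' by apply: contraTneq z'U' => <-; rewrite setD11.
have pz' : p != z' by apply: contraNneq npz' => <-; rewrite connect0.
have cpz' : c p z' != col.
  apply: contra npz' => /eqP cpz'; apply: connect1.
  by rewrite /color_rel pU' z'U' pz' cpz' eqxx.
case: (no_rainbow vp pz' vz') => [-> | [cpz'_col | cvp_col]].
- by rewrite cpz c_sym.
- by rewrite cpz'_col cvz' eqxx in cpz'.
- by rewrite cvp_col cvz' eqxx in cvp.
Qed.

Lemma off_colors_equal p q : p \in U' -> q \in U' ->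
  c v p != col -> c v q != col -> c v p = c v q.
Proof.
move=> pU' qU' cvp cvq; have [pq | npq] := boolP (conn' p q).
  have [z zU' npz] := disconnected_from p.
  have nqz : ~~ conn' q z by apply: contra npz; apply: connect_trans pq.
  rewrite (color_seen_from_deleted pU' zU' cvp npz).
  rewrite (color_seen_from_deleted qU' zU' cvq nqz).
  exact/esym/(outside_component_color zU' npz pq).
have nqp : ~~ conn' q p by rewrite connect_color_sym.
rewrite (color_seen_from_deleted pU' qU' cvp npq).
by rewrite (color_seen_from_deleted qU' pU' cvq nqp) c_sym.
Qed.

End VertexDeletion.

Lemma color_at_vertex col (U : {set T}) v w : connected_in col U ->
  v \in U -> w \in U -> v != w -> exists2 z, z \in U :\ v & c v z = col.
Proof.
move=> conn vU wU vw.
have [z /and4P [_ zU vz /eqP cvz]] := color_edge_of_connect vw (conn _ _ vU wU).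
by exists z; rewrite // !inE eq_sym vz.
Qed.

Section ThreeColors.
Variables (U : {set T}) (a b d : K).
Hypothesis conn : forall col, used_in col U -> connected_in col U.
Hypotheses (ua : used_in a U) (ub : used_in b U) (ud : used_in d U).
Hypotheses (ab : a != b) (bd : b != d) (ad : a != d).

Lemma connected_after_deletion v col :
  v \in U -> used_in col U -> connected_in col (U :\ v).
Proof.
move=> vU ucol x y xU' yU'; apply/negPn/negP => nxy.
have [xv xU] := setD1P xU'.
have at_v e : used_in e U -> exists2 z, z \in U :\ v & c v z = e.
  by move=> ue; apply: color_at_vertex (conn ue) vU xU _; rewrite eq_sym.
have eq_off e f : used_in e U -> used_in f U -> e != col -> f != col -> e = f.
  move=> ue uf; have [ze zeU' <-] := at_v _ ue; have [zf zfU' <-] := at_v _ uf.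
  exact: off_colors_equal (conn ucol) xU' yU' nxy ze zf zeU' zfU'.
case: (eqVneq a col) => [a_col | a_ncol].
  by move: bd; rewrite (eq_off b d) ?eqxx // -a_col eq_sym.
case: (eqVneq b col) => [b_col | b_ncol].
  by move: ad; rewrite (eq_off a d) ?eqxx // -b_col eq_sym.
by move: ab; rewrite (eq_off a b) ?eqxx.
Qed.

End ThreeColors.

Lemma card_gt2_of_used (U : {set T}) a b :
  used_in a U -> used_in b U -> a != b -> 2 < #|U|.
Proof.
move=> [x [y]] /and4P [xU yU xy /eqP <-].
move=> [x' [y']] /and4P [x'U y'U x'y' /eqP <-].
apply: contraNT => /negbTE U_le2.
have U_xy : U = [set x; y].
  apply/eqP; rewrite eq_sym eqEcard subUset !sub1set xU yU cards2 xy.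
  by rewrite leqNgt U_le2.
move: x'U y'U x'y'; rewrite U_xy !inE.
by case/orP => /eqP -> /orP [] /eqP ->; rewrite ?eqxx // c_sym eqxx.
Qed.

Lemma at_most_two_colors (U : {set T}) a b d :
  (forall col, used_in col U -> connected_in col U) ->
  used_in a U -> used_in b U -> used_in d U -> [|| a == b, b == d | a == d].
Proof.
move: {2}#|U|.+1 (ltnSn #|U|) => s; elim: s U => // s IH U U_lt conn ua ub ud.
apply/negPn/negP; rewrite !negb_or => /and3P [ab bd ad].
have U_gt2 := card_gt2_of_used ua ub ab.
have [v vU] : exists v, v \in U by apply/card_gt0P; lia.
have conn' := connected_after_deletion conn ua ub ud ab bd ad vU.
have [y [w [yU' wU' yw]]] :
    exists y w, [/\ y \in U :\ v, w \in U :\ v & y != w].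
  by apply/card_gt1P; move: U_gt2; rewrite (cardsD1 v U) vU; lia.
have used' e : used_in e U -> used_in e (U :\ v).
  move=> ue; have [z yz] := color_edge_of_connect yw (conn' e ue y w yU' wU').
  by exists y, z.
have U'_lt : #|U :\ v| < s by move: U_lt; rewrite (cardsD1 v U) vU; lia.
have conn_U' e : used_in e (U :\ v) -> connected_in e (U :\ v).
  by move=> ue; apply/conn'/(used_inS (subsetDl _ _) ue).
have := IH _ U'_lt conn_U' (used' _ ua) (used' _ ub) (used' _ ud).
by rewrite (negbTE ab) (negbTE bd) (negbTE ad).
Qed.

Variables n m : nat.

Hypothesis no_double_star : forall u v (A B : {set T}),
  u != v -> n <= #|A| -> m <= #|B| -> [disjoint A & B] ->
  u \notin A :|: B -> v \notin A :|: B ->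
  {in A, forall a, c u a = c u v} -> {in B, forall b, c v b = c u v} -> False.

Lemma joined_sets_small (P Q : {set T}) col : [disjoint P & Q] ->
  {in P & Q, forall p q, c p q = col} -> m < #|P| -> n < #|Q| -> False.
Proof.
move=> PQ PQ_col P_gt Q_gt.
have [u uP] : exists u, u \in P by apply/card_gt0P; lia.
have [v vQ] : exists v, v \in Q by apply/card_gt0P; lia.
have notPQ z : z \in P -> z \in Q -> False.
  by move=> zP; rewrite (disjointFr PQ zP).
have uv : u != v by apply: contraTneq vQ => <-; apply/negP/notPQ.
apply: (no_double_star (A := Q :\ v) (B := P :\ u) uv).
- by move: (cardsD1 v Q); rewrite vQ; lia.
- by move: (cardsD1 u P); rewrite uP; lia.
- by apply: disjointW (subsetDl _ _) (subsetDl _ _) _; rewrite disjoint_sym.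
- by rewrite !inE eqxx /= orbF; apply/negP => /andP [_ /(notPQ _ uP)].
- by rewrite !inE eqxx /=; apply/negP => /andP [_ /notPQ]; apply.
- by move=> a /setD1P [_ aQ]; rewrite !PQ_col.
- by move=> b /setD1P [_ bP]; rewrite c_sym !PQ_col.
Qed.

Lemma card_outside_module (S : {set T}) :
  module S -> n < #|S| -> #|~: S| <= m * #|K|.
Proof.
move=> /moduleP S_module S_gt.
have [s0 s0S] : exists s0, s0 \in S by apply/card_gt0P; lia.
have fiber_small i : #|[set w in ~: S | c w s0 == i]| <= m.
  rewrite leqNgt; apply/negP => W_gt.
  apply: (joined_sets_small (col := i)) W_gt S_gt.
    by rewrite disjoints_subset; apply/subsetP => w; rewrite !inE => /andP [].
  by move=> p q; rewrite !inE => /andP [pS /eqP <-] qS; apply: S_module.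
rewrite -sum1_card (partition_big (fun w => c w s0) predT) //=.
rewrite mulnC -sum_nat_const.
by apply: leq_sum => i _; rewrite sum1dep_card.
Qed.

Section Parts.
Variable S : {set T}.
Hypothesis S_module : module S.
Hypothesis proper_small : forall Y, module Y -> Y \proper S -> #|Y| <= n.
Hypothesis S_large : 2 * n + 1 < #|S|.

Definition part x :=
  [arg max_(Y > [set x] | [&& module Y, x \in Y & Y \proper S]) #|Y|].

Lemma part_spec x : x \in S ->
  [/\ module (part x), x \in part x & part x \proper S] /\
  forall Y, module Y -> x \in Y -> Y \proper S -> #|Y| <= #|part x|.
Proof.
move=> xS; rewrite /part; case: arg_maxnP.
  by rewrite module1 set11 properEcard sub1set xS cards1 /=; lia.
move=> Y /and3P [mY xY pY] Y_max; split => // Z mZ xZ pZ.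
by apply: Y_max; rewrite mZ xZ pZ.
Qed.

Lemma part_module x : x \in S -> module (part x).
Proof. by case/part_spec => [[]]. Qed.

Lemma mem_part x : x \in S -> x \in part x.
Proof. by case/part_spec => [[]]. Qed.

Lemma part_sub x : x \in S -> part x \subset S.
Proof. by case/part_spec => [[_ _ /proper_sub]]. Qed.

Lemma card_part x : x \in S -> #|part x| <= n.
Proof. by case/part_spec => [[mP _ pP] _]; apply: proper_small. Qed.

Lemma properU_small (X Y : {set T}) : X \subset S -> Y \subset S ->
  #|X| <= n -> #|Y| <= n -> X :|: Y \proper S.
Proof.
move=> XS YS Xn Yn; rewrite properEcard subUset XS YS /=.
by have := cardsUI X Y; lia.
Qed.

Lemma part_max x Y : x \in S -> module Y -> x \in Y -> Y \proper S ->
  Y \subset part x.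
Proof.
move=> xS mY xY pY.
have mZ := moduleU (part_module xS) mY (mem_part xS) xY.
have pZ : part x :|: Y \proper S.
  by apply: properU_small; rewrite ?part_sub ?card_part ?proper_sub ?(proper_small mY).
have cZ : #|part x :|: Y| <= #|part x|.
  by case: (part_spec xS) => _; apply; rewrite // inE mem_part.
have <- : part x :|: Y = part x by apply/eqP; rewrite eq_sym eqEcard subsetUl.
exact: subsetUr.
Qed.

Lemma part_eq x y : x \in S -> y \in part x -> part y = part x.
Proof.
move=> xS yx; have yS := subsetP (part_sub xS) y yx.
have mZ := moduleU (part_module xS) (part_module yS) yx (mem_part yS).
have pZ : part x :|: part y \proper S.
  by apply: properU_small; rewrite ?part_sub ?card_part.
have xZ : x \in part x :|: part y by rewrite inE mem_part.
have yZ : y \in part x :|: part y by rewrite inE mem_part ?orbT.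
apply/eqP; rewrite eqEsubset.
rewrite (subset_trans (subsetUr _ _) (part_max xS mZ xZ pZ)).
by rewrite (subset_trans (subsetUl _ _) (part_max yS mZ yZ pZ)).
Qed.

Lemma part_sym x y : x \in S -> y \in S -> (y \in part x) = (x \in part y).
Proof.
move=> xS yS; apply/idP/idP => [yx | xy].
  by rewrite (part_eq xS yx) mem_part.
by rewrite (part_eq yS xy) mem_part.
Qed.

Lemma notin_part x y z : x \in S -> y \in S -> y \notin part x ->
  z \in part y -> z \notin part x.
Proof.
move=> xS yS yx zy; apply: contra yx => zx.
by rewrite -(part_eq xS zx) (part_eq yS zy) mem_part.
Qed.

Lemma part_color x y z : x \in S -> y \notin part x -> z \in part x ->
  c y z = c y x.
Proof.
by move=> xS yx zx; apply: (moduleP _ (part_module xS)); rewrite ?mem_part.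
Qed.

Definition rep x := odflt x [pick z in part x].

Lemma rep_part x : x \in S -> rep x \in part x.
Proof.
by move=> xS; rewrite /rep; case: pickP => [z //|/(_ x)]; rewrite mem_part.
Qed.

Lemma rep_S x : x \in S -> rep x \in S.
Proof. by move=> xS; apply: (subsetP (part_sub xS)); apply: rep_part. Qed.

Lemma rep_eq x y : x \in S -> part x = part y -> rep x = rep y.
Proof.
by move=> xS e; rewrite /rep -e; case: pickP => // /(_ x); rewrite mem_part.
Qed.

Lemma same_part x y : x \in S -> y \in S -> (y \in part x) = (rep x == rep y).
Proof.
move=> xS yS; apply/idP/eqP => [yx | e].
  by rewrite (rep_eq xS (esym (part_eq xS yx))).
rewrite part_sym // -(part_eq yS (rep_part yS)) -e.
by rewrite (part_eq xS (rep_part xS)) mem_part.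
Qed.

Definition reps := rep @: S.

Lemma reps_spec r : r \in reps -> r \in S /\ rep r = r.
Proof.
case/imsetP => x xS ->; split; first exact: rep_S.
by apply: rep_eq; rewrite ?rep_S // (part_eq xS (rep_part xS)).
Qed.

Lemma color_rep x y : x \in S -> y \in S -> y \notin part x ->
  c (rep x) (rep y) = c x y.
Proof.
move=> xS yS yx.
have rx_y : rep x \notin part y.
  by rewrite -part_sym ?rep_S // (part_eq xS (rep_part xS)).
rewrite (part_color yS rx_y (rep_part yS)) c_sym.
by rewrite (part_color xS yx (rep_part xS)) c_sym.
Qed.

(* Otherwise the parts whose representatives lie in the col-component of an
   edge a b form a proper submodule of S meeting two parts, contradicting the
   maximality of [part a]. *)
Lemma reps_connected col : used_in col reps -> connected_in col reps.
Proof.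
move=> [a [b]] /and4P [aR bR ab /eqP cab] x y xR yR; apply/negPn/negP => nxy.
have [r rR nar] := exists_disconnected a (connect_color_sym col reps) xR yR nxy.
have [aS ra] := reps_spec aR; have [bS rb] := reps_spec bR.
have [rS rr] := reps_spec rR.
pose M := [set z in S | connect (color_rel col reps) a (rep z)].
have M_module : module M.
  apply/moduleP => y0 z1 z2 y0M; have [y0S | y0S] := boolP (y0 \in S).
    have ny0 : ~~ connect (color_rel col reps) a (rep y0).
      by move: y0M; rewrite inE y0S.
    suff to_a z : z \in M -> c y0 z = c (rep y0) a by move=> /to_a -> /to_a ->.
    rewrite inE => /andP [zS az].
    have zy0 : z \notin part y0.
      by rewrite same_part //; apply: contraNneq ny0 => ->.
    rewrite -(color_rep y0S zS zy0).
    exact: outside_component_color (imset_f rep y0S) ny0 az.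
  by rewrite !inE => /andP [z1S _] /andP [z2S _]; apply: (moduleP _ S_module).
have M_proper : M \proper S.
  apply/properP; split; first by apply/subsetP => z; rewrite inE => /andP [].
  by exists r; rewrite // inE rS rr (negbTE nar).
have aM : a \in M by rewrite inE aS ra connect0.
have bM : b \in M.
  by rewrite inE bS rb; apply: connect1; rewrite /color_rel aR bR ab cab eqxx.
have := subsetP (part_max aS M_module aM M_proper) b bM.
by rewrite same_part // ra rb (negbTE ab).
Qed.

Lemma cross_color_used x y : x \in S -> y \in S -> y \notin part x ->
  used_in (c x y) reps.
Proof.
move=> xS yS yx; exists (rep x), (rep y).
by rewrite /color_rel !imset_f // -same_part // yx color_rep ?eqxx.
Qed.

Lemma three_parts : exists x y z, [/\ x \in S, y \in S & z \in S] /\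
  [/\ y \notin part x, z \notin part x & z \notin part y].
Proof.
have [x xS] : exists x, x \in S by apply/card_gt0P; lia.
have [y] : exists y, y \in S :\: part x.
  by apply/card_gt0P; rewrite cardsDS ?part_sub //; have := card_part xS; lia.
rewrite inE => /andP [yx yS].
have [z] : exists z, z \in S :\: (part x :|: part y).
  apply/card_gt0P; rewrite cardsDS ?subUset ?part_sub //.
  have := cardsUI (part x) (part y).
  by have := card_part xS; have := card_part yS; lia.
rewrite !inE negb_or => /andP [/andP [zx zy] zS].
by exists x, y, z.
Qed.

Lemma cross_two_colors : exists r b, forall x y, x \in S -> y \in S ->
  y \notin part x -> c x y = r \/ c x y = b.
Proof.
have [x0 [y0 [z0 [[x0S y0S _] [y0x0 _ _]]]]] := three_parts.
pose is_other (p : T * T) :=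
  [&& p.1 \in S, p.2 \in S, p.2 \notin part p.1 & c p.1 p.2 != c x0 y0].
case: (pickP is_other) => [[x1 y1] /and4P [/= x1S y1S y1x1 other] | none].
  exists (c x0 y0), (c x1 y1) => x y xS yS yx.
  have := at_most_two_colors reps_connected (cross_color_used x0S y0S y0x0)
    (cross_color_used x1S y1S y1x1) (cross_color_used xS yS yx).
  by rewrite eq_sym (negbTE other) /= => /orP [] /eqP <-; [right | left].
exists (c x0 y0), (c x0 y0) => x y xS yS yx; left.
by move: (none (x, y)); rewrite /is_other /= xS yS yx => /negbFE /eqP.
Qed.

Section Counting.
Hypothesis S_big : 2 * n + 3 * m + 8 <= #|S|.
Hypothesis n_small : n <= 6 * m + 6.

Definition cross_nbhd col x :=
  [set y in S | (y \notin part x) && (c x y == col)].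

Lemma cross_nbhdP col x y :
  reflect [/\ y \in S, y \notin part x & c x y = col] (y \in cross_nbhd col x).
Proof.
by rewrite inE; apply: (iffP and3P) => [] [yS yx /eqP cxy]; split => //; apply/eqP.
Qed.

Lemma double_star_of_cross_nbhds col x y : x \in S -> y \in S ->
  y \notin part x -> c x y = col ->
  n + m < #|cross_nbhd col x| -> m < #|cross_nbhd col y| -> False.
Proof.
move=> xS yS yx cxy x_big y_big.
have [B BD cardB] :
    exists2 B : {set T}, B \subset cross_nbhd col y :\ x & #|B| = m.
  apply: card_subset_eq; have := cardsD1 x (cross_nbhd col y).
  by have := leq_b1 (x \in cross_nbhd col y); lia.
pose A := (cross_nbhd col x :\ y) :\: B.
have cardA : n <= #|A|.
  rewrite cardsD; have := subset_leq_card (subsetIr (cross_nbhd col x :\ y) B).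
  have := cardsD1 y (cross_nbhd col x).
  by have := leq_b1 (y \in cross_nbhd col x); lia.
have inB z : z \in B -> z != x /\ z \in cross_nbhd col y.
  by move=> /(subsetP BD) /setD1P.
have xy : x != y by apply: contraNneq yx => <-; rewrite mem_part.
apply: (no_double_star xy cardA (eq_leq (esym cardB))).
- rewrite disjoints_subset; exact: subsetDr.
- apply/negP; case/setUP => [| /inB [/eqP //]].
  by case/setDP => /setD1P [_ /cross_nbhdP [_]]; rewrite mem_part.
- apply/negP; case/setUP => [/setDP [/setD1P [/eqP //]] |].
  by case/inB => _ /cross_nbhdP [_]; rewrite mem_part.
- by move=> a /setDP [/setD1P [_ /cross_nbhdP [_ _ ->]]].
- by move=> b /inB [_ /cross_nbhdP [_ _ ->]].
Qed.

Lemma card_cross_nbhd_le_of_part col x : x \in S -> m < #|part x| ->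
  #|cross_nbhd col x| <= n.
Proof.
move=> xS part_gt; rewrite leqNgt; apply/negP => nbhd_gt.
apply: (joined_sets_small (col := col)) part_gt nbhd_gt.
  rewrite disjoint_sym disjoints_subset; apply/subsetP => z.
  by case/cross_nbhdP => _ zx _; rewrite inE.
move=> p q px /cross_nbhdP [_ qx <-].
by rewrite c_sym (part_color xS qx px) c_sym.
Qed.

Section TwoCrossColors.
Variables r b : K.
Hypothesis cross_rb : forall x y, x \in S -> y \in S -> y \notin part x ->
  c x y = r \/ c x y = b.

Lemma card_cross_nbhds x : x \in S ->
  #|S| <= #|part x| + #|cross_nbhd r x| + #|cross_nbhd b x|.
Proof.
move=> xS.
have cover : S \subset part x :|: cross_nbhd r x :|: cross_nbhd b x.
  apply/subsetP => y yS; rewrite !inE yS /=.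
  have [// | yx] := boolP (y \in part x).
  by case: (cross_rb xS yS yx) => ->; rewrite eqxx ?orbT.
have := subset_leq_card cover.
have := cardsUI (part x :|: cross_nbhd r x) (cross_nbhd b x).
by have := cardsUI (part x) (cross_nbhd r x); lia.
Qed.

Lemma card_cross_nbhd_le x : x \in S -> #|cross_nbhd r x| <= n + m.
Proof.
move=> xS; rewrite leqNgt; apply/negP => x_big.
have small_r y : y \in cross_nbhd r x -> #|cross_nbhd r y| <= m.
  case/cross_nbhdP => yS yx cxy; rewrite leqNgt; apply/negP.
  exact: double_star_of_cross_nbhds xS yS yx cxy x_big.
have large_b y : y \in cross_nbhd r x -> n + 2 * m + 8 <= #|cross_nbhd b y|.
  move=> yD; have [yS _ _] := cross_nbhdP _ _ _ yD.
  have := card_cross_nbhds yS.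
  by have := card_part yS; have := small_r y yD; lia.
have [y1 y1D] : exists y1, y1 \in cross_nbhd r x by apply/card_gt0P; lia.
have [y1S _ _] := cross_nbhdP _ _ _ y1D.
have [y2] : exists y2, y2 \in cross_nbhd r x :\: (part y1 :|: cross_nbhd r y1).
  apply/card_gt0P; rewrite cardsD.
  have := subset_leq_card (subsetIr (cross_nbhd r x) (part y1 :|: cross_nbhd r y1)).
  have := cardsUI (part y1) (cross_nbhd r y1).
  by have := card_part y1S; have := small_r y1 y1D; lia.
rewrite in_setD in_setU negb_or => /andP [/andP [y2y1 y2_nr] y2D].
have [y2S _ _] := cross_nbhdP _ _ _ y2D.
have cy1y2 : c y1 y2 = b.
  case: (cross_rb y1S y2S y2y1) => // cr.
  by move: y2_nr; rewrite inE y2S y2y1 cr eqxx.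
apply: (double_star_of_cross_nbhds y1S y2S y2y1 cy1y2).
  by have := large_b y1 y1D; lia.
by have := large_b y2 y2D; lia.
Qed.

End TwoCrossColors.

Lemma card_part_ge x : x \in S -> 3 * m + 8 <= #|part x|.
Proof.
move=> xS; have [r [b cross_rb]] := cross_two_colors.
have cross_br x' y : x' \in S -> y \in S -> y \notin part x' ->
    c x' y = b \/ c x' y = r.
  by move=> x'S yS yx'; rewrite or_comm; apply: cross_rb.
have cover := card_cross_nbhds cross_rb xS.
have part_gt : m < #|part x|.
  have := card_cross_nbhd_le cross_rb xS.
  by have := card_cross_nbhd_le cross_br xS; lia.
have := card_cross_nbhd_le_of_part r xS part_gt.
by have := card_cross_nbhd_le_of_part b xS part_gt; lia.
Qed.

Lemma card_parts_le_cross_nbhd a b1 b2 : a \in S -> b1 \in S -> b2 \in S ->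
  b1 \notin part a -> b2 \notin part a -> b2 \notin part b1 -> c a b1 = c a b2 ->
  #|part b1| + #|part b2| <= #|cross_nbhd (c a b1) a|.
Proof.
move=> aS b1S b2S b1a b2a b2b1 e.
have in_nbhd bi : bi \in S -> bi \notin part a -> c a bi = c a b1 ->
    part bi \subset cross_nbhd (c a b1) a.
  move=> biS bia cabi; apply/subsetP => z zbi; apply/cross_nbhdP; split.
  - exact: subsetP (part_sub biS) z zbi.
  - exact: notin_part aS biS bia zbi.
  - by rewrite (part_color biS _ zbi) // -part_sym.
have sub : part b1 :|: part b2 \subset cross_nbhd (c a b1) a.
  by rewrite subUset !in_nbhd.
have dis : [disjoint part b1 & part b2].
  rewrite disjoints_subset; apply/subsetP => z zb1.
  by rewrite inE; apply: (notin_part b2S b1S _ zb1); rewrite -part_sym.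
have := cardsUI (part b1) (part b2).
rewrite (disjoint_setI0 dis) cards0 addn0 => <-.
exact: subset_leq_card sub.
Qed.

Lemma no_large_module_with_small_submodules : False.
Proof.
have no_cherry a b1 b2 : a \in S -> b1 \in S -> b2 \in S ->
    b1 \notin part a -> b2 \notin part a -> b2 \notin part b1 ->
    c a b1 = c a b2 -> False.
  move=> aS b1S b2S b1a b2a b2b1 e.
  have := card_parts_le_cross_nbhd aS b1S b2S b1a b2a b2b1 e.
  have a_part : m < #|part a| by have := card_part_ge aS; lia.
  have := card_cross_nbhd_le_of_part (c a b1) aS a_part.
  by have := card_part_ge b1S; have := card_part_ge b2S; lia.
have [x [y [z [[xS yS zS] [yx zx zy]]]]] := three_parts.
have xy : x \notin part y by rewrite -part_sym.
have xz : x \notin part z by rewrite -part_sym.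
have yz : y \notin part z by rewrite -part_sym.
have neq u v : u \in S -> v \notin part u -> u != v.
  by move=> uS vu; apply: contraNneq vu => <-; rewrite mem_part.
have [e | [e | e]] := no_rainbow (neq _ _ xS yx) (neq _ _ yS zy) (neq _ _ xS zx).
- by apply: (no_cherry y x z) => //; rewrite c_sym.
- by apply: (no_cherry z x y) => //; rewrite c_sym (c_sym z y).
- exact: (no_cherry x y z).
Qed.

End Counting.

End Parts.

Theorem card_lt_of_gallai_double_star_free : n <= 6 * m + 6 ->
  #|T| < 2 * n + m * (#|K| + 3) + 8.
Proof.
move=> n_small; rewrite ltnNge; apply/negP => T_big.
pose big_module Y := module Y && (n < #|Y|).
have T_module : big_module setT.
  by rewrite /big_module moduleT cardsT; move: T_big; rewrite mulnDr; lia.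
case: (arg_minnP (fun Y : {set T} => #|Y|) T_module).
move=> S /andP [S_module S_gt] S_min.
have proper_small Y : module Y -> Y \proper S -> #|Y| <= n.
  move=> mY YS; rewrite leqNgt; apply/negP => Y_gt.
  have := S_min Y; rewrite /big_module mY Y_gt => /(_ isT).
  by rewrite leqNgt proper_card.
have S_big : 2 * n + 3 * m + 8 <= #|S|.
  have := card_outside_module S_module S_gt; have := cardsC S.
  by move: T_big; rewrite mulnDr; lia.
apply: (no_large_module_with_small_submodules S_module proper_small _ S_big n_small).
lia.
Qed.

End Coloring.

Lemma rainbow_K3_free N k (c : 'I_N -> 'I_N -> 'I_k) : ~ has_rainbow_K3 c ->
  forall x y z, x != y -> y != z -> x != z ->
  c x y = c y z \/ c y z = c x z \/ c x y = c x z.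
Proof.
move=> no_rb x y z xy yz xz.
case: (eqVneq (c x y) (c y z)) => [-> | ne1]; first by left.
case: (eqVneq (c y z) (c x z)) => [-> | ne2]; first by right; left.
case: (eqVneq (c x y) (c x z)) => [-> | ne3]; first by right; right.
by case: no_rb; exists x, y, z.
Qed.

Lemma mono_double_star_free n m N k (c : 'I_N -> 'I_N -> 'I_k) :
  ~ has_mono_double_star n m c ->
  forall u v (A B : {set 'I_N}),
  u != v -> n <= #|A| -> m <= #|B| -> [disjoint A & B] ->
  u \notin A :|: B -> v \notin A :|: B ->
  {in A, forall a, c u a = c u v} -> {in B, forall b, c v b = c u v} -> False.
Proof.
move=> no_ds u v A B uv nA mB AB uAB vAB A_col B_col.
have [A' A'A cardA'] := card_subset_eq nA.
have [B' B'B cardB'] := card_subset_eq mB.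
have /subsetP sub := setUSS A'A B'B.
apply: no_ds; exists (c u v), u, v, A', B'; split; split => //.
- exact: disjointW A'A B'B AB.
- exact: contra (sub u) uAB.
- exact: contra (sub v) vAB.
- by move=> a /(subsetP A'A) /A_col.
- by move=> b /(subsetP B'B) /B_col.
Qed.

Theorem proposition4 (n m k : nat) :
  1 <= m -> m <= n -> 3 <= k -> n <= 6 * m + 6 ->
  gr_K3_double_star_le n m k
    (if odd n then 2 * n + m * (k + 3) + 9 else 2 * n + m * (k + 3) + 8).
Proof.
move=> _ _ _ n_small.
exists (2 * n + m * (k + 3) + 8); split; first by case: (odd n); lia.
move=> c c_sym; apply: NNPP => neither.
have no_rb : ~ has_rainbow_K3 c by move=> rb; apply: neither; left.
have no_ds : ~ has_mono_double_star n m c by move=> ds; apply: neither; right.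
have := card_lt_of_gallai_double_star_free c_sym (rainbow_K3_free no_rb)
  (mono_double_star_free no_ds) n_small.
by rewrite !card_ord ltnn.
Qed.
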